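(* Let $K$ be a nilpotent group of class $3$, let $x,y\in K$, and let $\alpha>1$ be an integer such that the elements $x^{2^{\alpha}}$, $[x,y]^{2^{\alpha-1}}$ and $x^{2^{\alpha-1}}[x,y]^{-2^{\alpha-2}}$ all centralize $\langle x,y\rangle$. Then $y^{2^{\alpha-1}}$ commutes with $x$.
   Context: Commutators are $[x,y]=x^{-1}y^{-1}xy$, left-normed: $[x,y,z]=[[x,y],z]$. *)

From Stdlib Require Import Arith.

Record Group := {
  carrier :> Type;
  gmul : carrier -> carrier -> carrier;
  ginv : carrier -> carrier;
  gone : carrier;
  gmulA : forall a b c, gmul a (gmul b c) = gmul (gmul a b) c;
  gmul1l : forall a, gmul gone a = a;
  gmul1r : forall a, gmul a gone = a;
  gmulVl : forall a, gmul (ginv a) a = gone;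
  gmulVr : forall a, gmul a (ginv a) = gone
}.

Arguments gmul {g}.
Arguments ginv {g}.
Arguments gone {g}.

Fixpoint gpow {K : Group} (x : K) (n : nat) : K :=
  match n with
  | O => gone
  | S m => gmul (gpow x m) x
  end.

Definition comm {K : Group} (x y : K) : K :=
  gmul (gmul (gmul (ginv x) (ginv y)) x) y.

Inductive gen {K : Group} (S : K -> Prop) : K -> Prop :=
  | gen_in : forall s, S s -> gen S s
  | gen_one : gen S gone
  | gen_mul : forall a b, gen S a -> gen S b -> gen S (gmul a b)
  | gen_inv : forall a, gen S a -> gen S (ginv a).

(* lower central series: lcs n = gamma_{n+1}(K);
   gamma_1 = K, gamma_{i+1} = [gamma_i, K] *)
Fixpoint lcs (K : Group) (n : nat) : K -> Prop :=
  match n with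
  | O => fun _ => True
  | S m => gen (fun z => exists g h, lcs K m g /\ z = comm g h)
  end.

Definition nilpotent_of_class (K : Group) (c : nat) : Prop :=
  (forall z, lcs K c z -> z = gone) /\ (exists z, lcs K (c - 1) z /\ z <> gone).

Definition centralizes {K : Group} (z : K) (H : K -> Prop) : Prop :=
  forall h, H h -> gmul z h = gmul h z.

Definition gen2 {K : Group} (x y : K) : K -> Prop :=
  gen (fun z => z = x \/ z = y).

(* Put c = [x,y], d = [c,y], f = [c,x]; class 3 makes d and f central, so
   x^k y = y x^k c^k f^(k(k-1)/2) and x y^k = y^k x c^k d^(k(k-1)/2).
   With n = 2^(alpha-1) = 2m and w = x^n c^(-m) central in <x,y>:
   c^m commutes with x (as x^n = w c^m does), so f^m = 1;
   comparing the two expressions for x^n y gives c^n = d^m;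
   c^n commutes with y, so d^n = 1.
   Hence x y^n = y^n x c^n d^(m(2m-1)) = y^n x d^(nm) = y^n x. *)

From Stdlib Require Import Arith Lia.

Local Notation "a ** b" := (gmul a b) (at level 40, left associativity).

Fixpoint choose2 (k : nat) : nat :=
  match k with O => O | S j => choose2 j + j end.

Lemma choose2_double m : choose2 (2 * m) = m * (2 * m - 1).
Proof.
  induction m as [|m IHm]; [reflexivity|].
  replace (2 * S m) with (S (S (2 * m))) by lia.
  change (choose2 (2 * m) + 2 * m + S (2 * m) = S m * (S (S (2 * m)) - 1)).
  rewrite IHm; nia.
Qed.

Section InGroup.

Variable K : Group.
Implicit Types a b c d f z : K.

Definition central (z : K) : Prop := forall g, z ** g = g ** z.

Lemma mul_cancel_l a b c : a ** b = a ** c -> b = c.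
Proof.
  intro H.
  rewrite <- (gmul1l K b), <- (gmul1l K c), <- (gmulVl K a), <- !gmulA, H.
  reflexivity.
Qed.

Lemma gpow_add (z : K) i j : gpow z (i + j) = gpow z i ** gpow z j.
Proof.
  induction j as [|j IHj]; simpl.
  - rewrite Nat.add_0_r, gmul1r; reflexivity.
  - rewrite Nat.add_succ_r; simpl. rewrite IHj, gmulA; reflexivity.
Qed.

Lemma gpow_mul (z : K) i j : gpow z (i * j) = gpow (gpow z i) j.
Proof.
  induction j as [|j IHj]; simpl.
  - rewrite Nat.mul_0_r; reflexivity.
  - rewrite Nat.mul_succ_r, gpow_add, IHj; reflexivity.
Qed.

Lemma gpow1g k : gpow (@gone K) k = gone.
Proof. induction k as [|k IHk]; simpl; [|rewrite IHk, gmul1l]; reflexivity. Qed.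

Lemma gpow_conj a b z k : a ** z = z ** b -> gpow a k ** z = z ** gpow b k.
Proof.
  intro H; induction k as [|k IHk]; simpl.
  - rewrite gmul1l, gmul1r; reflexivity.
  - rewrite <- gmulA, H, gmulA, IHk, gmulA; reflexivity.
Qed.

Lemma gpow_mul_commute a b k :
  a ** b = b ** a -> gpow (a ** b) k = gpow a k ** gpow b k.
Proof.
  intro H; induction k as [|k IHk]; simpl.
  - rewrite gmul1l; reflexivity.
  - rewrite IHk, !gmulA, <- (gmulA _ (gpow a k) (gpow b k) a).
    rewrite (gpow_conj _ _ _ k (eq_sym H)), !gmulA; reflexivity.
Qed.

Lemma commute_of_comm_eq1 a b : comm a b = gone -> a ** b = b ** a.
Proof.
  unfold comm; intro H. apply (mul_cancel_l (ginv a ** ginv b)).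
  rewrite (gmulA _ _ a b), H, <- gmulA, (gmulA _ (ginv b) b), gmulVl, gmul1l, gmulVl.
  reflexivity.
Qed.

Lemma mul_swap_comm a b : a ** b = b ** (a ** comm a b).
Proof.
  unfold comm.
  rewrite !gmulA, <- (gmulA _ b a (ginv a)), gmulVr, gmul1r, gmulVr, gmul1l.
  reflexivity.
Qed.

Section CentralCommutator.

Variables c b d : K.
Hypothesis cb : c ** b = b ** (c ** d).
Hypothesis d_central : central d.

Lemma gpow_swap_central k : gpow c k ** b = b ** (gpow c k ** gpow d k).
Proof. rewrite (gpow_conj _ _ _ k cb), gpow_mul_commute; [reflexivity | exact (eq_sym (d_central c))]. Qed.

Lemma gpow_comm_eq1_of_commute k : gpow c k ** b = b ** gpow c k -> gpow d k = gone.
Proof.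
  rewrite gpow_swap_central; intro E.
  apply (mul_cancel_l (gpow c k)). rewrite gmul1r.
  exact (mul_cancel_l _ _ _ E).
Qed.

End CentralCommutator.

Lemma collect_pow_left a b c f :
  a ** b = b ** (a ** c) -> c ** a = a ** (c ** f) -> central f ->
  forall k, gpow a k ** b = b ** (gpow a k ** (gpow c k ** gpow f (choose2 k))).
Proof.
  intros ab ca f_central k.
  induction k as [|k IHk]; simpl.
  - rewrite !gmul1l, !gmul1r; reflexivity.
  - rewrite <- gmulA, ab, gmulA, IHk.
    rewrite <- (gmulA _ b), <- (gmulA _ (gpow a k)), <- (gmulA _ (gpow c k)).
    rewrite (gmulA _ (gpow f (choose2 k)) a), (gpow_conj _ _ _ _ (f_central a)).
    rewrite <- (gmulA _ a), (gmulA _ (gpow c k) a), (gpow_swap_central _ _ _ ca f_central).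
    rewrite !gmulA, <- (gmulA _ _ (gpow f k) (gpow f (choose2 k))), <- gpow_add.
    rewrite <- (gmulA _ _ (gpow f (k + choose2 k)) c), (gpow_conj _ _ _ _ (f_central c)).
    rewrite Nat.add_comm, !gmulA; reflexivity.
Qed.

Lemma collect_pow_right a b c d :
  a ** b = b ** (a ** c) -> c ** b = b ** (c ** d) -> central d ->
  forall k, a ** gpow b k = gpow b k ** (a ** (gpow c k ** gpow d (choose2 k))).
Proof.
  intros ab cb d_central k.
  induction k as [|k IHk]; simpl.
  - rewrite !gmul1l, !gmul1r; reflexivity.
  - rewrite gmulA, IHk, <- gmulA, <- (gmulA _ a), <- (gmulA _ (gpow c k)).
    rewrite (gpow_conj _ _ _ _ (d_central b)), (gmulA _ (gpow c k) b).
    rewrite (gpow_swap_central _ _ _ cb d_central), (gmulA _ a (b ** _)), (gmulA _ a b), ab.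
    rewrite (gpow_conj c c c k eq_refl), gpow_add, !gmulA.
    rewrite <- (gmulA _ _ (gpow d k) (gpow d (choose2 k))), <- gpow_add.
    rewrite Nat.add_comm, gpow_add, gmulA; reflexivity.
Qed.

Lemma comm3_central :
  (forall z, lcs K 3 z -> z = gone) -> forall u v g, central (comm (comm u v) g).
Proof.
  intros lcs3_trivial u v g h. apply commute_of_comm_eq1, lcs3_trivial.
  apply gen_in. exists (comm (comm u v) g), h. split; [|reflexivity].
  apply gen_in. exists (comm u v), g. split; [|reflexivity].
  apply gen_in. exists u, v. split; [exact I | reflexivity].
Qed.

Section TwoGenerators.

Variables (x y : K) (m : nat).
Let c := comm x y.
Let d := comm c y.
Let f := comm c x.
Let w := gpow x (2 * m) ** ginv (gpow c m).
Hypothesis d_central : central d.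
Hypothesis f_central : central f.
Hypothesis wx : w ** x = x ** w.
Hypothesis wy : w ** y = y ** w.
Hypothesis c2m_y : gpow c (2 * m) ** y = y ** gpow c (2 * m).

Let xy : x ** y = y ** (x ** c) := mul_swap_comm x y.
Let cx : c ** x = x ** (c ** f) := mul_swap_comm c x.
Let cy : c ** y = y ** (c ** d) := mul_swap_comm c y.

Lemma gpow_x_eq : gpow x (2 * m) = w ** gpow c m.
Proof. unfold w. rewrite <- gmulA, gmulVl, gmul1r; reflexivity. Qed.

Lemma gpow_f_eq1 : gpow f m = gone.
Proof.
  apply (gpow_comm_eq1_of_commute _ _ _ cx f_central).
  apply (mul_cancel_l w).
  rewrite gmulA, <- gpow_x_eq, (gmulA _ w x), wx, <- gmulA, <- gpow_x_eq.
  apply gpow_conj; reflexivity.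
Qed.

Lemma gpow_c_eq : gpow c (2 * m) = gpow d m.
Proof.
  pose proof (collect_pow_left _ _ _ _ xy cx f_central (2 * m)) as E.
  rewrite choose2_double, (gpow_mul f), gpow_f_eq1, gpow1g, gmul1r in E.
  assert (E' : gpow x (2 * m) ** y = y ** (gpow x (2 * m) ** gpow d m)).
  { rewrite gpow_x_eq, <- (gmulA _ w), (gpow_swap_central _ _ _ cy d_central).
    rewrite (gmulA _ w y), wy, !gmulA; reflexivity. }
  rewrite E' in E. exact (eq_sym (mul_cancel_l _ _ _ (mul_cancel_l _ _ _ E))).
Qed.

Lemma gpow_d_eq1 : gpow d (2 * m) = gone.
Proof. exact (gpow_comm_eq1_of_commute _ _ _ cy d_central _ c2m_y). Qed.

Lemma gpow_y_commute : gpow y (2 * m) ** x = x ** gpow y (2 * m).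
Proof.
  rewrite (collect_pow_right _ _ _ _ xy cy d_central (2 * m)), gpow_c_eq.
  rewrite <- gpow_add, choose2_double.
  replace (m + m * (2 * m - 1)) with (2 * m * m) by nia.
  rewrite (gpow_mul d), gpow_d_eq1, gpow1g, gmul1r; reflexivity.
Qed.

End TwoGenerators.

End InGroup.

Theorem lemma6p1 (K : Group) (x y : K) (alpha : nat) :
  nilpotent_of_class K 3 ->
  1 < alpha ->
  centralizes (gpow x (2 ^ alpha)) (gen2 x y) ->
  centralizes (gpow (comm x y) (2 ^ (alpha - 1))) (gen2 x y) ->
  centralizes (gmul (gpow x (2 ^ (alpha - 1)))
                    (ginv (gpow (comm x y) (2 ^ (alpha - 2))))) (gen2 x y) ->
  gmul (gpow y (2 ^ (alpha - 1))) x = gmul x (gpow y (2 ^ (alpha - 1))).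
Proof.
  intros [lcs3_trivial _] alpha_gt1 _ cn_central w_central.
  assert (x_in : gen2 x y x) by (apply gen_in; auto).
  assert (y_in : gen2 x y y) by (apply gen_in; auto).
  assert (n_double : 2 ^ (alpha - 1) = 2 * 2 ^ (alpha - 2)).
  { replace (alpha - 1) with (S (alpha - 2)) by lia; reflexivity. }
  rewrite n_double in *.
  apply gpow_y_commute; auto using comm3_central.
Qed.
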